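(* Let $m$ be a monad and $\mathrm{ExceptT}\ e\ m\ a = m\ (\mathrm{Either}\ e\ a)$ with operations $\mathrm{return}$, $\gg\!=$, $\mathrm{throwE}$, $\mathrm{catchE}$ as defined in the context. Then $\mathrm{ExceptT}\ \cdot\ m\ \cdot$ is a conjoinedly monadic error algebra with $(\mathrm{return}, \gg\!=)$ in the second index and $(\mathrm{throwE}, \mathrm{catchE})$ in the first index. Consequently (taking $m$ to be the identity monad) the type constructor $\mathrm{Either}$, with $\mathrm{return} = \mathrm{Right}$, $\mathrm{Right}\ r \gg\!= k = k\ r$, $\mathrm{Left}\ l \gg\!= k = \mathrm{Left}\ l$, $\mathrm{throw} = \mathrm{Left}$, $\mathrm{catch}\ (\mathrm{Left}\ e)\ h = h\ e$, $\mathrm{catch}\ (\mathrm{Right}\ a)\ h = \mathrm{Right}\ a$, is also a conjoinedly monadic error algebra.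
   Context: Operations on $\mathrm{ExceptT}$ (with $\mathrm{return}_m$, $\gg\!=_m$ the monad operations of $m$): $\mathrm{return}\ a = \mathrm{return}_m\ (\mathrm{Right}\ a)$; $x \gg\!= k = x \gg\!=_m (\lambda v.\ \mathbf{case}\ v\ \mathbf{of}\ \{\mathrm{Left}\ e \to \mathrm{return}_m\ (\mathrm{Left}\ e);\ \mathrm{Right}\ r \to k\ r\})$; $\mathrm{throwE}\ e = \mathrm{return}_m\ (\mathrm{Left}\ e)$; $\mathrm{catchE} : \mathrm{ExceptT}\ e\ m\ a \to (e \to \mathrm{ExceptT}\ f\ m\ a) \to \mathrm{ExceptT}\ f\ m\ a$, $\mathrm{catchE}\ x\ h = x \gg\!=_m (\lambda v.\ \mathbf{case}\ v\ \mathbf{of}\ \{\mathrm{Left}\ l \to h\ l;\ \mathrm{Right}\ r \to \mathrm{return}_m\ (\mathrm{Right}\ r)\})$. A conjoinedly monadic error algebra is a type constructor $M$ of two type arguments (error index $e$, value index $a$) with operations $\mathrm{return} : a \to M\ e\ a$, $(\gg\!=) : M\ e\ a \to (a \to M\ e\ b) \to M\ e\ b$, $\mathrm{throw} : e \to M\ e\ a$, $\mathrm{catch} : M\ e\ a \to (e \to M\ f\ a) \to M\ f\ a$ such that: for every fixed $e$, $(\mathrm{return}, \gg\!=)$ satisfy the monad laws in $a$ ($\mathrm{return}\ x \gg\!= f = f\ x$, $p \gg\!= \mathrm{return} = p$, $(p \gg\!= g)\gg\!= h = p \gg\!= (\lambda x.\ g\ x \gg\!= h)$); for every fixed $a$,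 $(\mathrm{throw}, \mathrm{catch})$ satisfy the monad laws in $e$ ($\mathrm{catch}\ (\mathrm{throw}\ e)\ h = h\ e$, $\mathrm{catch}\ p\ \mathrm{throw} = p$, $\mathrm{catch}\ (\mathrm{catch}\ p\ g)\ h = \mathrm{catch}\ p\ (\lambda x.\ \mathrm{catch}\ (g\ x)\ h)$); and $\mathrm{catch}\ (\mathrm{return}\ x)\ f = \mathrm{return}\ x$ and $\mathrm{throw}\ e \gg\!= f = \mathrm{throw}\ e$. Equality is extensional. *)

Inductive Either (E A : Type) : Type :=
| Left : E -> Either E A
| Right : A -> Either E A.
Arguments Left {E A} _.
Arguments Right {E A} _.

Record IsMonad (m : Type -> Type)
    (ret : forall A : Type, A -> m A)
    (bind : forall A B : Type, m A -> (A -> m B) -> m B) : Prop := {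
  monad_left_id : forall (A B : Type) (x : A) (f : A -> m B),
      bind A B (ret A x) f = f x;
  monad_right_id : forall (A : Type) (p : m A), bind A A p (ret A) = p;
  monad_assoc : forall (A B C : Type) (p : m A) (g : A -> m B) (h : B -> m C),
      bind B C (bind A B p g) h = bind A C p (fun x => bind B C (g x) h)
}.

Record IsConjoinedErrorAlgebra (M : Type -> Type -> Type)
    (ret : forall E A : Type, A -> M E A)
    (bind : forall E A B : Type, M E A -> (A -> M E B) -> M E B)
    (throw : forall E A : Type, E -> M E A)
    (catch : forall E F A : Type, M E A -> (E -> M F A) -> M F A) : Prop := {
  cea_bind_left_id : forall (E A B : Type) (x : A) (f : A -> M E B),
      bind E A B (ret E A x) f = f x;
  cea_bind_right_id : forall (E A : Type) (p : M E A),
      bind E A A p (ret E A) = p;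
  cea_bind_assoc : forall (E A B C : Type) (p : M E A) (g : A -> M E B)
      (h : B -> M E C),
      bind E B C (bind E A B p g) h = bind E A C p (fun x => bind E B C (g x) h);
  cea_catch_left_id : forall (E F A : Type) (e : E) (h : E -> M F A),
      catch E F A (throw E A e) h = h e;
  cea_catch_right_id : forall (E A : Type) (p : M E A),
      catch E E A p (throw E A) = p;
  cea_catch_assoc : forall (E F G A : Type) (p : M E A) (g : E -> M F A)
      (h : F -> M G A),
      catch F G A (catch E F A p g) h
      = catch E G A p (fun x => catch F G A (g x) h);
  cea_catch_ret : forall (E F A : Type) (x : A) (f : E -> M F A),
      catch E F A (ret E A x) f = ret F A x;
  cea_bind_throw : forall (E A B : Type) (e : E) (f : A -> M E B),
      bind E A B (throw E A e) f = throw E B e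
}.

Definition ExceptT (m : Type -> Type) (E A : Type) : Type := m (Either E A).

Section ExceptT.
Variables (m : Type -> Type) (retm : forall A : Type, A -> m A)
  (bindm : forall A B : Type, m A -> (A -> m B) -> m B).

Definition exceptT_return (E A : Type) (a : A) : ExceptT m E A :=
  retm (Either E A) (Right a).

Definition exceptT_bind (E A B : Type) (x : ExceptT m E A)
    (k : A -> ExceptT m E B) : ExceptT m E B :=
  bindm (Either E A) (Either E B) x
    (fun v => match v with
              | Left e => retm (Either E B) (Left e)
              | Right r => k r
              end).

Definition throwE (E A : Type) (e : E) : ExceptT m E A :=
  retm (Either E A) (Left e).

Definition catchE (E F A : Type) (x : ExceptT m E A)
    (h : E -> ExceptT m F A) : ExceptT m F A :=
  bindm (Either E A) (Either F A) x
    (fun v => match v with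
              | Left l => h l
              | Right r => retm (Either F A) (Right r)
              end).
End ExceptT.

Definition either_return (E A : Type) (a : A) : Either E A := Right a.
Definition either_bind (E A B : Type) (x : Either E A) (k : A -> Either E B)
    : Either E B :=
  match x with Right r => k r | Left l => Left l end.
Definition either_throw (E A : Type) (e : E) : Either E A := Left e.
Definition either_catch (E F A : Type) (x : Either E A) (h : E -> Either F A)
    : Either F A :=
  match x with Left e => h e | Right a => Right a end.

(** The laws of [ExceptT] all reduce to the monad laws of [m]: after unfolding,
    both bind and catch are a single [bindm] followed by a case split on
    [Either], and the two are mirror images of each other (exchange [Left] and
    [Right]).  [Either] is [ExceptT] over the identity monad, on the nose. *)

From Stdlib Require Import FunctionalExtensionality.

Section MonadFacts.

Variables (m : Type -> Type) (retm : forall A : Type, A -> m A)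
  (bindm : forall A B : Type, m A -> (A -> m B) -> m B).
Hypothesis Hm : IsMonad m retm bindm.

Lemma bind_ext (A B : Type) (p : m A) (k k' : A -> m B) :
  (forall x, k x = k' x) -> bindm A B p k = bindm A B p k'.
Proof.
  intros Hk. f_equal. apply functional_extensionality. exact Hk.
Qed.

Lemma bind_ret_ext (A : Type) (p : m A) (k : A -> m A) :
  (forall x, k x = retm A x) -> bindm A A p k = p.
Proof.
  intros Hk. rewrite (bind_ext A A p k (retm A) Hk). apply (monad_right_id _ _ _ Hm).
Qed.

End MonadFacts.

Section ExceptTLaws.

Variables (m : Type -> Type) (retm : forall A : Type, A -> m A)
  (bindm : forall A B : Type, m A -> (A -> m B) -> m B).
Hypothesis Hm : IsMonad m retm bindm.

Let ret := exceptT_return m retm.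
Let bind := exceptT_bind m retm bindm.
Let throw := throwE m retm.
Let catch := catchE m retm bindm.

Lemma exceptT_bind_left_id (E A B : Type) (x : A) (f : A -> ExceptT m E B) :
  bind E A B (ret E A x) f = f x.
Proof. apply (monad_left_id _ _ _ Hm). Qed.

Lemma exceptT_bind_right_id (E A : Type) (p : ExceptT m E A) :
  bind E A A p (ret E A) = p.
Proof. apply (bind_ret_ext m retm bindm Hm). intros [e | r]; reflexivity. Qed.

Lemma exceptT_bind_assoc (E A B C : Type) (p : ExceptT m E A)
    (g : A -> ExceptT m E B) (h : B -> ExceptT m E C) :
  bind E B C (bind E A B p g) h = bind E A C p (fun x => bind E B C (g x) h).
Proof.
  unfold bind, exceptT_bind. rewrite (monad_assoc _ _ _ Hm).
  apply (bind_ext m bindm). intros [e | r].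
  - apply (monad_left_id _ _ _ Hm).
  - reflexivity.
Qed.

Lemma exceptT_catch_left_id (E F A : Type) (e : E) (h : E -> ExceptT m F A) :
  catch E F A (throw E A e) h = h e.
Proof. apply (monad_left_id _ _ _ Hm). Qed.

Lemma exceptT_catch_right_id (E A : Type) (p : ExceptT m E A) :
  catch E E A p (throw E A) = p.
Proof. apply (bind_ret_ext m retm bindm Hm). intros [e | r]; reflexivity. Qed.

Lemma exceptT_catch_assoc (E F G A : Type) (p : ExceptT m E A)
    (g : E -> ExceptT m F A) (h : F -> ExceptT m G A) :
  catch F G A (catch E F A p g) h = catch E G A p (fun x => catch F G A (g x) h).
Proof.
  unfold catch, catchE. rewrite (monad_assoc _ _ _ Hm).
  apply (bind_ext m bindm). intros [e | r].
  - reflexivity.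
  - apply (monad_left_id _ _ _ Hm).
Qed.

Lemma exceptT_catch_ret (E F A : Type) (x : A) (f : E -> ExceptT m F A) :
  catch E F A (ret E A x) f = ret F A x.
Proof. apply (monad_left_id _ _ _ Hm). Qed.

Lemma exceptT_bind_throw (E A B : Type) (e : E) (f : A -> ExceptT m E B) :
  bind E A B (throw E A e) f = throw E B e.
Proof. apply (monad_left_id _ _ _ Hm). Qed.

Theorem exceptT_error_algebra : IsConjoinedErrorAlgebra (ExceptT m) ret bind throw catch.
Proof.
  split.
  - exact exceptT_bind_left_id.
  - exact exceptT_bind_right_id.
  - exact exceptT_bind_assoc.
  - exact exceptT_catch_left_id.
  - exact exceptT_catch_right_id.
  - exact exceptT_catch_assoc.
  - exact exceptT_catch_ret.
  - exact exceptT_bind_throw.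
Qed.

End ExceptTLaws.

Definition id_ret (A : Type) (a : A) : A := a.
Definition id_bind (A B : Type) (x : A) (k : A -> B) : B := k x.

Lemma id_monad : IsMonad (fun A => A) id_ret id_bind.
Proof. split; reflexivity. Qed.

Theorem either_error_algebra :
  IsConjoinedErrorAlgebra Either either_return either_bind either_throw either_catch.
Proof. exact (exceptT_error_algebra (fun A => A) id_ret id_bind id_monad). Qed.

Theorem theorem4 :
  (forall (m : Type -> Type) (retm : forall A : Type, A -> m A)
     (bindm : forall A B : Type, m A -> (A -> m B) -> m B),
     IsMonad m retm bindm ->
     IsConjoinedErrorAlgebra (ExceptT m)
       (exceptT_return m retm) (exceptT_bind m retm bindm)
       (throwE m retm) (catchE m retm bindm))
  /\
  IsConjoinedErrorAlgebra Either either_return either_bind either_throw either_catch.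
Proof.
  split.
  - exact exceptT_error_algebra.
  - exact either_error_algebra.
Qed.
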